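(* Let $q$ be a prime power and let $\mathcal{F}=(\mathcal{F}_1,\ldots,\mathcal{F}_r)$ be a flag on $\mathbb{F}_{q^n}$. Then the best friend of $\mathcal{F}$ is the intersection of the best friends of the subspaces $\mathcal{F}_1,\ldots,\mathcal{F}_r$. Moreover, if $1\in\mathcal{F}_1$, every friend of $\mathcal{F}$ is contained in $\mathcal{F}_1$.
   Context: A flag on $\mathbb{F}_{q^n}$ is a sequence $(\mathcal{F}_1,\ldots,\mathcal{F}_r)$ of $\mathbb{F}_q$-subspaces with $\{0\}\subsetneq\mathcal{F}_1\subsetneq\cdots\subsetneq\mathcal{F}_r\subsetneq\mathbb{F}_{q^n}$. A subfield $\mathbb{F}_{q^m}$ of $\mathbb{F}_{q^n}$ is a friend of an $\mathbb{F}_q$-subspace $\mathcal{U}$ if $\mathcal{U}$ is a vector space over $\mathbb{F}_{q^m}$; the best friend of $\mathcal{U}$ is its largest friend. A subfield is a friend of the flag $\mathcal{F}$ if it is a friend of every $\mathcal{F}_i$; the best friend of $\mathcal{F}$ is its largest friend. *)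

From HB Require Import structures.
From mathcomp Require Import all_boot all_order all_algebra all_field.
Set Implicit Arguments. Unset Strict Implicit. Unset Printing Implicit Defensive.
Import GRing.Theory.
Local Open Scope ring_scope.

(* Setting: F = F_q a finite field, L = F_{q^n} a finite-dimensional field
   extension of F.  F_q-subspaces of L are {vspace L}; the subfields of L that
   contain F_q (= the F_{q^m}, m | n) are {subfield L}. *)

Definition friend (F : finFieldType) (L : fieldExtType F)
  (K : {subfield L}) (U : {vspace L}) : Prop :=
  forall a x, a \in K -> x \in U -> a * x \in U.

Definition best_friend (F : finFieldType) (L : fieldExtType F)
  (K : {subfield L}) (U : {vspace L}) : Prop :=
  friend K U /\ forall K' : {subfield L}, friend K' U -> (K' <= K)%VS.

(* A flag (F_1, ..., F_{r+1}) on L, indexed by 'I_r.+1 (ord0 is F_1):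
   {0} < F_1 < ... < F_{r+1} < L, all strict inclusions. *)
Definition is_flag (F : finFieldType) (L : fieldExtType F) (r : nat)
  (Fl : 'I_r.+1 -> {vspace L}) : Prop :=
  [/\ Fl ord0 != 0%VS,
      (forall i j : 'I_r.+1, (i < j)%N -> (Fl i <= Fl j)%VS /\ Fl i != Fl j)
    & Fl ord_max != fullv].

Definition flag_friend (F : finFieldType) (L : fieldExtType F) (r : nat)
  (K : {subfield L}) (Fl : 'I_r.+1 -> {vspace L}) : Prop :=
  forall i, friend K (Fl i).

Definition flag_best_friend (F : finFieldType) (L : fieldExtType F) (r : nat)
  (K : {subfield L}) (Fl : 'I_r.+1 -> {vspace L}) : Prop :=
  flag_friend K Fl /\
  forall K' : {subfield L}, flag_friend K' Fl -> (K' <= K)%VS.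

From HB Require Import structures.
From mathcomp Require Import all_boot all_order all_algebra all_field.
Set Implicit Arguments. Unset Strict Implicit.
Import GRing.Theory.
Local Open Scope ring_scope.

(* Friendship is inherited by subfields, so a subfield is a friend of every
   F_i exactly when it lies in every best friend B_i, i.e. in their
   intersection; that intersection is itself a subfield, hence the best friend
   of the flag.  If 1 lies in a subspace U, any friend K of U satisfies
   K = K * 1 <= U. *)

Section Friends.

Variables (F : finFieldType) (L : fieldExtType F).

Lemma bigcap_aspace_exists (I : Type) (s : seq I) (B : I -> {subfield L}) :
  exists K : {subfield L}, (K : {vspace L}) = (\bigcap_(i <- s) (B i : {vspace L}))%VS.
Proof.
elim: s => [|a s [K defK]]; first by exists (aspacef L); rewrite big_nil.
by exists (B a :&: K)%AS; rewrite big_cons /= defK.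
Qed.

Lemma friend_subv (K K' : {subfield L}) (U : {vspace L}) :
  (K' <= K)%VS -> friend K U -> friend K' U.
Proof. by move=> /subvP sK'K frK a x /sK'K; apply: frK. Qed.

Lemma best_friendP {B K : {subfield L}} {U : {vspace L}} :
  best_friend B U -> friend K U <-> (K <= B)%VS.
Proof. by case=> frB maxB; split=> [/maxB | /friend_subv]; last exact. Qed.

Lemma flag_best_friend_bigcap (r : nat) (Fl : 'I_r.+1 -> {vspace L})
    (B : 'I_r.+1 -> {subfield L}) (K : {subfield L}) :
  (forall i, best_friend (B i) (Fl i)) ->
  (K : {vspace L}) = (\bigcap_(i < r.+1) (B i : {vspace L}))%VS ->
  flag_best_friend K Fl.
Proof.
move=> bfB defK.
have flag_friendP (K' : {subfield L}) :
    flag_friend K' Fl <-> (K' <= K)%VS.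
  rewrite defK; split=> [frK' | /subv_bigcapP sK'B i].
    by apply/subv_bigcapP=> i _; apply/(best_friendP (bfB i)).
  by apply/(best_friendP (bfB i))/sK'B.
by split=> [|K' /flag_friendP //]; apply/flag_friendP.
Qed.

Lemma friend_subv_unit (K : {subfield L}) (U : {vspace L}) :
  1 \in U -> friend K U -> (K <= U)%VS.
Proof. by move=> U1 frK; apply/subvP=> a aK; rewrite -[a]mulr1 frK. Qed.

End Friends.

Theorem corollary3p18 (F : finFieldType) (L : fieldExtType F) (r : nat)
  (Fl : 'I_r.+1 -> {vspace L}) (B : 'I_r.+1 -> {subfield L}) :
  is_flag Fl ->
  (forall i, best_friend (B i) (Fl i)) ->
  (exists K : {subfield L},
      flag_best_friend K Fl /\
      (K : {vspace L}) = (\bigcap_(i < r.+1) (B i : {vspace L}))%VS) /\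
  (1%R \in Fl ord0 ->
     forall K : {subfield L}, flag_friend K Fl -> (K <= Fl ord0)%VS).
Proof.
move=> _ bfB; split.
  have [K defK] := bigcap_aspace_exists (index_enum 'I_r.+1) B.
  by exists K; split=> //; apply: flag_best_friend_bigcap bfB defK.
by move=> F1 K frK; apply: friend_subv_unit (frK ord0).
Qed.
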